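(* Let $\mathrm{X},\mathrm{Y}$ be locally compact Hausdorff spaces, let $F(\mathrm{X})\subset C_0(\mathrm{X})_+$ contain sufficiently many functions to peak on compact $G_\delta$ subsets of $\mathrm{X}$, and let $T:F(\mathrm{X})\to C_0(\mathrm{Y})_+$ satisfy $\|Tf_1+\cdots+Tf_n\|=\|f_1+\cdots+f_n\|$ for all $n\in\mathbb{N}$ and $f_1,\dots,f_n\in F(\mathrm{X})$. If $x_1,x_2\in\mathrm{X}$ and $x_1\neq x_2$, then $\operatorname{psupp}_T(x_1)\cap\operatorname{psupp}_T(x_2)=\emptyset$.
   Context: $C_0(\mathrm{X})_+$: nonnegative continuous functions vanishing at infinity, sup-norm. $\operatorname{pk}(f)=\{x: f(x)=\|f\|\}$. $F(\mathrm{X})$ ''contains sufficiently many functions to peak on compact $G_\delta$ subsets'' if every nonempty compact $G_\delta$ set $K\subset\mathrm{X}$ equals $\operatorname{pk}(f)$ for some $f\in F(\mathrm{X})$. For $x\in\mathrm{X}$: $\operatorname{PKat}(x)=\{g\in F(\mathrm{X}): g(x)=\|g\|\}$ and $\operatorname{psupp}_T(x)=\bigcap_{h\in\operatorname{PKat}(x)}\operatorname{pk}(Th)\subset\mathrm{Y}$. *)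

From HB Require Import structures.
From mathcomp Require Import all_boot all_order all_algebra.
From mathcomp Require Import all_classical all_reals all_analysis.
Set Implicit Arguments. Unset Strict Implicit. Unset Printing Implicit Defensive.
Import Order.TTheory GRing.Theory Num.Theory.
Import numFieldNormedType.Exports.
Local Open Scope classical_set_scope.
Local Open Scope ring_scope.

Section Defs.
Variable R : realType.

Definition supnorm (T : Type) (f : T -> R) : R := sup [set `|f x| | x in [set: T]].

Definition C0plus (X : topologicalType) (f : X -> R) : Prop :=
  continuous f /\ (forall x, 0 <= f x) /\
  (forall eps : R, 0 < eps -> compact [set x | eps <= `|f x|]).

Definition pk (T : Type) (f : T -> R) : set T := [set x | f x = supnorm f].

Definition compact_Gdelta (X : topologicalType) (K : set X) : Prop :=
  compact K /\ exists U : nat -> set X, (forall n, open (U n)) /\ K = \bigcap_n U n.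

Definition peaks_on_compact_Gdelta (X : topologicalType) (F : set (X -> R)) : Prop :=
  forall K : set X, K !=set0 -> compact_Gdelta K -> exists2 f, F f & K = pk f.

Definition PKat (X : Type) (F : set (X -> R)) (x : X) : set (X -> R) :=
  [set g | F g /\ g x = supnorm g].

Definition psupp (X Y : Type) (F : set (X -> R)) (T : (X -> R) -> (Y -> R)) (x : X)
  : set Y := \bigcap_(h in PKat F x) pk (T h).
End Defs.

From HB Require Import structures.
From mathcomp Require Import all_boot all_order all_algebra.
From mathcomp Require Import all_classical all_reals all_analysis.
From mathcomp Require Import lra.
Import Order.TTheory GRing.Theory Num.Theory.
Import numFieldNormedType.Exports.
Local Open Scope classical_set_scope.
Local Open Scope ring_scope.

(* Suppose y lies in psupp_T(x1) and in psupp_T(x2) with x1 <> x2.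
   Since X is locally compact Hausdorff, x1 and x2 have disjoint compact
   G_delta neighbourhoods K1, K2 (zero sets of Urysohn functions), and F
   contains f1, f2 with pk f1 = K1, pk f2 = K2.  Then f_i peaks at x_i, so y
   is a common peak point of T f1 and T f2, whence
     ||f1|| + ||f2|| = ||T f1|| + ||T f2|| <= ||T f1 + T f2|| = ||f1 + f2||.
   On the other hand two functions of C_0(X)_+ whose peak sets are nonempty
   and disjoint satisfy the strict inequality ||f1 + f2|| < ||f1|| + ||f2||:
   on the compact set {f1 >= ||f1||/2} the sum attains its maximum at a point
   which is not a peak point of both, and off that set the sum is at most
   ||f1||/2 + ||f2||. *)

Section SupNorm.
Context {R : realType} {T : Type}.

Lemma le_supnorm (f : T -> R) (x : T) :
  (forall y, 0 <= f y) -> (exists M, forall y, f y <= M) -> f x <= supnorm f.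
Proof.
move=> f0 [M fM]; rewrite /supnorm -[f x]ger0_norm //.
apply: ub_le_sup; last by exists x.
by exists M => _ [y _ <-]; rewrite ger0_norm.
Qed.

Lemma supnorm_le {f : T -> R} {c : R} (x0 : T) :
  (forall y, 0 <= f y) -> (forall y, f y <= c) -> supnorm f <= c.
Proof.
move=> f0 fc; apply: ge_sup; first by exists `|f x0|, x0.
by move=> _ [y _ <-]; rewrite ger0_norm.
Qed.

Lemma lt_supnorm_notpk (f : T -> R) (x : T) :
  (forall y, 0 <= f y) -> (exists M, forall y, f y <= M) -> ~ pk f x ->
  f x < supnorm f.
Proof. by move=> f0 fb npk; rewrite lt_neqAle le_supnorm // andbT; apply/eqP. Qed.

End SupNorm.

Section C0plus.
Context {R : realType} {X : topologicalType}.
Implicit Types f g : X -> R.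

(* A function vanishing at infinity is bounded: it is bounded by 1 off the
   compact set {f >= 1} and attains a maximum on that set. *)
Lemma C0plus_bounded {f} : C0plus f -> exists M, forall x, f x <= M.
Proof.
move=> [cf [f0 cpt]].
have [ne|emp] := pselect ([set x | 1 <= `|f x|] !=set0).
  have [c _ maxc] := compact_EVT_max ne (cpt 1 ltr01) (continuous_subspaceT cf).
  exists (Num.max 1 (f c)) => x; rewrite le_max.
  have [f1|/ltW ->//] := lerP 1 (f x).
  by rewrite maxc ?orbT // inE /= ger0_norm.
exists 1 => x; rewrite leNgt; apply/negP => /ltW f1.
by apply: emp; exists x; rewrite /= ger0_norm.
Qed.

Lemma C0plus_le_supnorm {f} x : C0plus f -> f x <= supnorm f.
Proof. by move=> Cf; apply: le_supnorm; [case: Cf => _ [] | exact: C0plus_bounded]. Qed.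

Lemma C0plus_lt_supnorm {f x} : C0plus f -> ~ pk f x -> f x < supnorm f.
Proof.
by move=> Cf; apply: lt_supnorm_notpk; [case: Cf => _ [] | exact: C0plus_bounded].
Qed.

Let addE f g (x : X) : (f + g) x = f x + g x. Proof. by []. Qed.

Lemma supnorm_add_common_peak {f g y} :
  C0plus f -> C0plus g -> pk f y -> pk g y -> supnorm f + supnorm g <= supnorm (f + g).
Proof.
move=> Cf Cg pkfy pkgy; have [_ [f0 _]] := Cf; have [_ [g0 _]] := Cg.
have [M fM] := C0plus_bounded Cf; have [N gN] := C0plus_bounded Cg.
rewrite -pkfy -pkgy -addE; apply: le_supnorm => [z|]; first exact: addr_ge0.
by exists (M + N) => z; apply: lerD.
Qed.

Lemma supnorm_add_lt {f g} :
  C0plus f -> C0plus g -> pk f !=set0 -> pk g !=set0 -> pk f `&` pk g = set0 ->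
  supnorm (f + g) < supnorm f + supnorm g.
Proof.
move=> Cf Cg [x1 pkfx1] [x2 pkgx2] disj.
have [cf [f0 cptf]] := Cf; have [cg [g0 _]] := Cg.
have no_common z : pk f z -> pk g z -> False.
  by move=> pkfz pkgz; have : (pk f `&` pk g) z by []; rewrite disj.
have f_gt0 : 0 < supnorm f.
  exact: le_lt_trans (f0 x2) (C0plus_lt_supnorm Cf (no_common x2 ^~ pkgx2)).
pose S := [set z | supnorm f / 2 <= `|f z|].
have S_neq0 : S !=set0.
  by exists x1; rewrite /S /= ger0_norm // pkfx1; lra.
have [c _ maxc] := compact_EVT_max S_neq0 (cptf _ (divr_gt0 f_gt0 (ltr0Sn _ 1)))
  (continuous_subspaceT (fun x => continuousD (cf x) (cg x))).
have fgc_lt : (f + g) c < supnorm f + supnorm g.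
  rewrite addE; have [pkfc|npkfc] := pselect (pk f c).
    apply: ler_ltD; first exact: C0plus_le_supnorm.
    by apply: C0plus_lt_supnorm Cg _; exact: no_common.
  by apply: ltr_leD; [exact: C0plus_lt_supnorm | exact: C0plus_le_supnorm].
have fg_bound z : (f + g) z <= Num.max ((f + g) c) (supnorm f / 2 + supnorm g).
  rewrite le_max; have [fz|fz] := lerP (supnorm f / 2) (f z).
    by rewrite maxc // inE /S /= ger0_norm.
  by rewrite addE; have := C0plus_le_supnorm z Cg; lra.
have fg_ge0 z : 0 <= (f + g) z by rewrite addE addr_ge0.
apply: le_lt_trans (supnorm_le x1 fg_ge0 fg_bound) _.
by rewrite gt_max fgc_lt /=; lra.
Qed.

End C0plus.

Lemma zero_set_bigcap (R : realType) (X : Type) (f : X -> R) :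
  (forall x, 0 <= f x) ->
  f @^-1` [set 0] = \bigcap_n f @^-1` [set r | r < n.+1%:R^-1].
Proof.
move=> f0; apply/seteqP; split => [y /= fy0 n _|y fy_small].
  by rewrite /= fy0 invr_gt0 ltr0n.
apply/eqP; rewrite eq_le f0 andbT leNgt; apply/negP => fy_gt0.
have [N _ /(_ N (leqnn N)) /= Nlt] := near_infty_natSinv_lt (PosNum fy_gt0).
by have := lt_trans (fy_small N I) Nlt; rewrite ltxx.
Qed.

(* In a locally compact Hausdorff space, every open neighbourhood of a point
   contains a compact G_delta neighbourhood of it: the zero set of an
   R-valued Urysohn function vanishing at the point and equal to 1 off a
   compact neighbourhood (any real type R can serve as codomain). *)
Lemma compact_Gdelta_in_open (R : realType) {X : topologicalType} {x : X} {U : set X} :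
  hausdorff_space X -> locally_compact [set: X] -> open U -> U x ->
  exists K : set X, [/\ compact_Gdelta K, K x & K `<=` U].
Proof.
move=> hX lcX oU Ux.
have := lcX x I; rewrite withinET => -[C nC [cC _]].
pose W := C° `&` U.
have oW : open W by apply: openI => //; exact: open_interior.
have nWx : ~ (~` W) x by apply; split.
have := @locally_compact_completely_regular X R lcX hX _ _
  (open_closedC oW) nWx.
move=> /(@uniform_separatorP X R) [f [cf rf f0 f1]].
have f_ge0 z : 0 <= f z.
  have /rf : range f (f z) by exists z.
  by rewrite /= in_itv /= => /andP[].
pose K := f @^-1` [set 0].
have KW : K `<=` W.
  move=> z Kz; apply: contrapT => nWz.
  have /f1 : (f @` ~` W) (f z) by exists z.
  by rewrite /= Kz => /eqP; rewrite eq_sym oner_eq0.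
have clK : closed K.
  by have := @closed_eq R 0; exact: (iffLR (continuous_closedP f) cf).
exists K; split; last 2 first.
- by apply: f0; exists x.
- by move=> z /KW [].
split.
  by apply: subclosed_compact clK cC _ => z /KW [/interior_subset].
exists (fun n => f @^-1` [set r | r < n.+1%:R^-1]); split; last first.
  exact: zero_set_bigcap.
by move=> n; have := @open_lt R n.+1%:R^-1; exact: (iffLR (continuousP f) cf).
Qed.

Lemma separate_by_compact_Gdelta (R : realType) {X : topologicalType} {x1 x2 : X} :
  hausdorff_space X -> locally_compact [set: X] -> x1 <> x2 ->
  exists K1 K2 : set X,
    [/\ compact_Gdelta K1, compact_Gdelta K2, K1 x1, K2 x2 & K1 `&` K2 = set0].
Proof.
move=> hX lcX x12.
have sep := hX; rewrite open_hausdorff in sep.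
have [[A B] /= [+ +] [oA oB /eqP AB0]] := sep x1 x2 (introN eqP x12).
rewrite !inE => Ax1 Bx2.
have [K1 [gK1 K1x1 K1A]] := compact_Gdelta_in_open R hX lcX oA Ax1.
have [K2 [gK2 K2x2 K2B]] := compact_Gdelta_in_open R hX lcX oB Bx2.
exists K1, K2; split => //; rewrite -subset0 -AB0.
exact: setISS.
Qed.

Section NormAdditive.
Context {R : realType} {X Y : Type} {F : set (X -> R)} {T : (X -> R) -> (Y -> R)}.
Hypothesis Hnorm : forall (n : nat) (f : 'I_n -> (X -> R)), (forall i, F (f i)) ->
  supnorm (\sum_(i < n) T (f i)) = supnorm (\sum_(i < n) f i).

Lemma supnorm_T {f} : F f -> supnorm (T f) = supnorm f.
Proof. by move=> Ff; have := Hnorm 1 (fun _ => f) (fun _ => Ff); rewrite !big_ord1. Qed.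

Lemma supnorm_T_add {f g} : F f -> F g -> supnorm (T f + T g) = supnorm (f + g).
Proof.
move=> Ff Fg; pose h (i : 'I_2) := if val i == 0%N then f else g.
have Fh i : F (h i) by rewrite /h; case: ifP.
by have := Hnorm 2 h Fh; rewrite !big_ord_recl !big_ord0 !addr0.
Qed.

End NormAdditive.

Theorem mainTheorem16 (R : realType) (X Y : topologicalType)
  (hX : hausdorff_space X) (lcX : locally_compact [set: X])
  (hY : hausdorff_space Y) (lcY : locally_compact [set: Y])
  (F : set (X -> R)) (HF : forall f, F f -> C0plus f)
  (Hpeak : peaks_on_compact_Gdelta F)
  (T : (X -> R) -> (Y -> R)) (HT : forall f, F f -> C0plus (T f))
  (Hnorm : forall (n : nat) (f : 'I_n -> (X -> R)), (forall i, F (f i)) ->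
     supnorm (\sum_(i < n) T (f i)) = supnorm (\sum_(i < n) f i))
  (x1 x2 : X) : x1 <> x2 -> psupp F T x1 `&` psupp F T x2 = set0.
Proof.
move=> x12; rewrite -subset0 => y [y1 y2].
have [K1 [K2 [gK1 gK2 K1x1 K2x2 K12]]] := separate_by_compact_Gdelta R hX lcX x12.
have [f1 Ff1 eK1] := Hpeak K1 (ex_intro _ x1 K1x1) gK1.
have [f2 Ff2 eK2] := Hpeak K2 (ex_intro _ x2 K2x2) gK2.
have pkTf1 : pk (T f1) y by apply: y1; split => //; rewrite eK1 in K1x1.
have pkTf2 : pk (T f2) y by apply: y2; split => //; rewrite eK2 in K2x2.
have := supnorm_add_common_peak (HT _ Ff1) (HT _ Ff2) pkTf1 pkTf2.
rewrite !(supnorm_T Hnorm) // (supnorm_T_add Hnorm) //.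
rewrite leNgt => /negP; apply.
apply: supnorm_add_lt (HF _ Ff1) (HF _ Ff2) _ _ _.
- by exists x1; rewrite -eK1.
- by exists x2; rewrite -eK2.
- by rewrite -eK1 -eK2.
Qed.
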